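(* Let $n\in\mathbb{N}$, $\beta\in\mathbb{R}$, $\epsilon\in\mathbb{R}^n$, $X\in\mathbb{R}^n$, $G_n\subseteq\{1,\dots,n\}$ and $o\in\mathbb{R}^n$ with $o_i=0$ for $i\notin G_n$; set $Y:=X\beta+\epsilon+o$. Let $\mathcal{U}_n\subseteq\mathcal{P}(\{1,\dots,n\})$ with $\emptyset\notin\mathcal{U}_n$ and $\mathrm{Inl}(\mathcal{U}_n):=\{S\in\mathcal{U}_n:S\cap G_n=\emptyset\}\ne\emptyset$. For $S\in\mathcal{U}_n$ and $U_n\in\mathrm{Inl}(\mathcal{U}_n)$ define $\eta_1(S):=\frac{|X_S^\top\epsilon_S|}{\|X_S\|_2^2}$ and $\eta_2(S,U_n)$ through \[ \eta_2^2(S,U_n):=\frac{1}{\|X_{S\setminus G_n}\|_2^2}\Big(\frac{|S|}{|U_n|}\|\epsilon_{U_n}\|_2^2-\|\epsilon_S\|_2^2-2\epsilon_S^\top o_S+\frac{(X_S^\top\epsilon_S)^2}{\|X_S\|_2^2}+2\frac{|X_S^\top\epsilon_S|\,|X_S^\top o_S|}{\|X_S\|_2^2}-\frac{|S|(X_{U_n}^\top\epsilon_{U_n})^2}{|U_n|\|X_{U_n}\|_2^2}\Big). \] Then \[ |\hat\beta^n_{\mathrm{BFS}}(\mathcal{U}_n)-\beta|\le\max_{S\in\mathcal{U}_n}\min_{U_n\in\mathrm{Inl}(\mathcal{U}_n)}\big(\eta_1(S)+\eta_2(S,U_n)\big). \]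
   Context: $X_S,Y_S,\epsilon_S,o_S$ denote subvectors with indices in $S$. $\hat\beta^S_{\mathrm{OLS}}(X,Y):=(X_S^\top X_S)^{+}X_S^\top Y_S$ ($^{+}$: Moore–Penrose inverse). BFS with collection $\mathcal{U}_n$: enumerate $S\in\mathcal{U}_n$ in a fixed order, compute $\mathrm{err}(S)=\frac1{|S|}\|Y_S-X_S\hat\beta^S_{\mathrm{OLS}}(X,Y)\|_2^2$, and output $\hat\beta^n_{\mathrm{BFS}}(\mathcal{U}_n):=\hat\beta^{S^*}_{\mathrm{OLS}}(X,Y)$ for the first minimizer $S^*$. Convention: a bound containing a summand with zero denominator is infinite. *)

From mathcomp Require Import all_boot all_order all_algebra.
From mathcomp Require Import reals constructive_ereal.
Set Implicit Arguments. Unset Strict Implicit. Unset Printing Implicit Defensive.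
Import Order.TTheory GRing.Theory Num.Theory.
Local Open Scope ring_scope.

Section BFS.
Variables (R : realType) (n : nat).
Implicit Types (X Y e o : 'I_n -> R) (S U G : {set 'I_n}).

Definition sqn (v : 'I_n -> R) S : R := \sum_(i in S) v i ^+ 2.
Definition ipr (v w : 'I_n -> R) S : R := \sum_(i in S) v i * w i.

Definition resp X (beta : R) e o : 'I_n -> R := fun i => X i * beta + e i + o i.

(* OLS on S, p = 1: (X_S^T X_S)^+ X_S^T Y_S; for a scalar the Moore-Penrose
   inverse is x^-1 if x <> 0 and 0 otherwise, which is MathComp's x^-1. *)
Definition ols X Y S : R := (sqn X S)^-1 * ipr X Y S.

Definition err X Y S : R := (#|S|%:R)^-1 * \sum_(i in S) (Y i - X i * ols X Y S) ^+ 2.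

(* BFS: enumerate the sets in the fixed order [ord], output OLS on the first
   minimizer of err. *)
Definition bfs X Y (ord : seq {set 'I_n}) : R :=
  ols X Y (nth set0 ord (find (fun S => all (fun T => err X Y S <= err X Y T) ord) ord)).

Definition inlier G S : bool := S :&: G == set0.

Local Open Scope ereal_scope.

Definition eta1 X e S : \bar R :=
  if sqn X S == 0%R then +oo else (`|ipr X e S| / sqn X S)%:E.

Definition eta2_num X e o S U : R :=
  (#|S|%:R / #|U|%:R * sqn e U - sqn e S - 2 * ipr e o S
   + (ipr X e S) ^+ 2 / sqn X S
   + 2 * `|ipr X e S| * `|ipr X o S| / sqn X S
   - #|S|%:R * (ipr X e U) ^+ 2 / (#|U|%:R * sqn X U))%R.

Definition eta2 X e o G S U : \bar R :=
  if [|| sqn X (S :\: G) == 0%R, sqn X S == 0%R, sqn X U == 0%R | #|U| == 0%N]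
  then +oo
  else (Num.sqrt (eta2_num X e o S U / sqn X (S :\: G)))%:E.

Definition bfs_bound X e o G (Un : {set {set 'I_n}}) : \bar R :=
  \big[maxe/-oo]_(S in Un)
     \big[mine/+oo]_(U in Un | inlier G U) (eta1 X e S + eta2 X e o G S U).

End BFS.

From mathcomp Require Import all_boot all_order all_algebra.
From mathcomp Require Import reals constructive_ereal ring lra.
Set Implicit Arguments. Unset Strict Implicit. Unset Printing Implicit Defensive.
Import Order.TTheory GRing.Theory Num.Theory.
Local Open Scope ring_scope.

(* BFS selects a set S with err S <= err U for every U in Un, in particular for
   the inlier sets, on which the outliers vanish and err only sees eps.  With
   a = |X_S|^2, b = X_S'eps_S and c = X_S'o_S, the estimation error is
   b / a + c / a; the first term is eta1(S).  Since o vanishes off G, the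
   residual of regressing o_S on X_S is at least (c / a)^2 |X_(S\G)|^2, and
   expanding err S <= err U, with the cross term b c bounded by |b| |c|, shows
   that this residual is at most the bracket defining eta2^2(S,U). *)

Lemma ler_norm_sqrt_div (R : rcfType) (x N d : R) :
  0 < d -> x ^+ 2 * d <= N -> `|x| <= Num.sqrt (N / d).
Proof.
by move=> d_gt0 le_xN; rewrite -sqrtr_sqr ler_wsqrtr // ler_pdivlMr.
Qed.

Section OLS.
Variables (R : realType) (n : nat).
Implicit Types (X Y e o : 'I_n -> R) (S U G : {set 'I_n}).

Definition rss X Y S : R := \sum_(i in S) (Y i - X i * ols X Y S) ^+ 2.

Lemma errE X Y S : err X Y S = (#|S|%:R)^-1 * rss X Y S.
Proof. by []. Qed.

Lemma sqn_ge0 Y S : 0 <= sqn Y S.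
Proof. by apply: sumr_ge0 => i _; apply: sqr_ge0. Qed.

Lemma sqn_gt0 Y S : sqn Y S != 0 -> 0 < sqn Y S.
Proof. by rewrite lt0r sqn_ge0 andbT. Qed.

Lemma sqnD Y Y' S : sqn (Y \+ Y') S = sqn Y S + 2 * ipr Y Y' S + sqn Y' S.
Proof.
rewrite /sqn /ipr mulr_sumr -!big_split /=.
by apply: eq_bigr => i _; ring.
Qed.

Lemma iprDr X Y Y' S : ipr X (Y \+ Y') S = ipr X Y S + ipr X Y' S.
Proof. by rewrite /ipr -big_split /=; apply: eq_bigr => i _; rewrite mulrDr. Qed.

Lemma olsDr X Y Y' S : ols X (Y \+ Y') S = ols X Y S + ols X Y' S.
Proof. by rewrite /ols iprDr mulrDr. Qed.

Lemma norm_ols X Y S : `|ols X Y S| = `|ipr X Y S| / sqn X S.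
Proof. by rewrite /ols normrM normfV (ger0_norm (sqn_ge0 _ _)) mulrC. Qed.

Lemma sum_sqr_sub_scale X Y S (t : R) :
  \sum_(i in S) (Y i - X i * t) ^+ 2 = sqn Y S - 2 * t * ipr X Y S + t ^+ 2 * sqn X S.
Proof.
rewrite /sqn /ipr !mulr_sumr -sumrB -big_split /=.
by apply: eq_bigr => i _; ring.
Qed.

Lemma rssE X Y S : sqn X S != 0 -> rss X Y S = sqn Y S - ipr X Y S ^+ 2 / sqn X S.
Proof. by move=> X0; rewrite /rss sum_sqr_sub_scale /ols; field. Qed.

Lemma eq_in_rss X Y Y' S : {in S, Y =1 Y'} -> rss X Y S = rss X Y' S.
Proof.
move=> YY'; have eq_ipr : ipr X Y S = ipr X Y' S.
  by apply: eq_bigr => i /YY' ->.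
by rewrite /rss /ols eq_ipr; apply: eq_bigr => i /YY' ->.
Qed.

Section Shift.
Variables (X Y Y' : 'I_n -> R) (b : R) (S : {set 'I_n}).
Hypotheses (X0 : sqn X S != 0) (Y'E : forall i, Y' i = X i * b + Y i).

Lemma ols_shift : ols X Y' S = b + ols X Y S.
Proof.
rewrite /ols; have -> : ipr X Y' S = b * sqn X S + ipr X Y S.
  rewrite /sqn /ipr mulr_sumr -big_split /=.
  by apply: eq_bigr => i _; rewrite Y'E; ring.
by rewrite mulrDr mulrCA mulVf // mulr1.
Qed.

Lemma rss_shift : rss X Y' S = rss X Y S.
Proof.
rewrite /rss ols_shift; apply: eq_bigr => i _.
by rewrite Y'E; congr (_ ^+ 2); ring.
Qed.

End Shift.

Lemma resp_shift X beta e o i : resp X beta e o i = X i * beta + (e \+ o) i.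
Proof. by rewrite /resp addrA. Qed.

Lemma inlier_notin G U i : inlier G U -> i \in U -> i \notin G.
Proof. by move=> /eqP/setP/(_ i); rewrite !inE => + iU; rewrite iU /= => ->. Qed.

Section Outliers.
Variables (o : 'I_n -> R) (G : {set 'I_n}).
Hypothesis oG : forall i, i \notin G -> o i = 0.

Lemma rss_inlier X e U : inlier G U -> rss X (e \+ o) U = rss X e U.
Proof.
by move=> UG; apply: eq_in_rss => i iU; rewrite /= oG ?addr0 // (inlier_notin UG iU).
Qed.

Lemma rss_outlier_ge X S : ols X o S ^+ 2 * sqn X (S :\: G) <= rss X o S.
Proof.
rewrite /rss (bigID (mem G)) /= -[leLHS]add0r.
apply: lerD; first by apply: sumr_ge0 => i _; apply: sqr_ge0.
rewrite /sqn mulr_sumr [leLHS]big_mkcond [leRHS]big_mkcond /=.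
apply: ler_sum => i _; rewrite inE.
case: (boolP (i \in G)) => [|iG] /=; first by rewrite andbF.
by rewrite andbT oG // sub0r sqrrN -exprMn mulrC.
Qed.

Lemma ols_outlier_sqr_le X e S U :
    sqn X S != 0 -> sqn X U != 0 -> (0 < #|S|)%N -> (0 < #|U|)%N -> inlier G U ->
    err X (e \+ o) S <= err X (e \+ o) U ->
  ols X o S ^+ 2 * sqn X (S :\: G) <= eta2_num X e o S U.
Proof.
move=> XS0 XU0 S0 U0 UG; rewrite !errE [rss _ _ U]rss_inlier // !rssE // sqnD iprDr.
have [s_gt0 u_gt0] : 0 < #|S|%:R :> R /\ 0 < #|U|%:R :> R by rewrite !ltr0n.
move=> /(ler_wpM2l (ltW s_gt0)); rewrite mulrA mulfV ?gt_eqF // mul1r mulrA => min_err.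
have := rss_outlier_ge X S; rewrite rssE //.
set a := sqn X S; set b := ipr X e S; set c := ipr X o S => outlier_rss.
have sqrD_div : (b + c) ^+ 2 / a = b ^+ 2 / a + 2 * (b * c / a) + c ^+ 2 / a.
  by rewrite /a; field.
have cross_le : b * c / a <= `|b| * `|c| / a.
  by rewrite ler_pM2r ?invr_gt0 ?sqn_gt0 // -normrM ler_norm.
rewrite /eta2_num -/a -/b -/c.
have -> : 2 * `|b| * `|c| / a = 2 * (`|b| * `|c| / a) by rewrite !mulrA.
have -> : #|S|%:R * ipr X e U ^+ 2 / (#|U|%:R * sqn X U)
        = #|S|%:R / #|U|%:R * (ipr X e U ^+ 2 / sqn X U).
  by field; rewrite XU0 gt_eqF.
move: min_err; rewrite sqrD_div; lra.
Qed.

Lemma ols_resp_bound X e beta S U :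
    sqn X S != 0 -> sqn X (S :\: G) != 0 -> sqn X U != 0 ->
    (0 < #|S|)%N -> (0 < #|U|)%N -> inlier G U ->
    err X (resp X beta e o) S <= err X (resp X beta e o) U ->
  `|ols X (resp X beta e o) S - beta|
    <= `|ipr X e S| / sqn X S + Num.sqrt (eta2_num X e o S U / sqn X (S :\: G)).
Proof.
move=> XS0 XSG0 XU0 S0 U0 UG; have shift := resp_shift X beta e o.
rewrite !errE (rss_shift XS0 shift) (rss_shift XU0 shift) => min_err.
rewrite (ols_shift XS0 shift) addrC addKr olsDr.
apply: le_trans (ler_normD _ _) _; rewrite norm_ols lerD //.
by apply: ler_norm_sqrt_div; [apply: sqn_gt0 | apply: ols_outlier_sqr_le].
Qed.

Lemma bfs_pair_bound X e beta S U :
    (0 < #|S|)%N -> inlier G U ->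
    err X (resp X beta e o) S <= err X (resp X beta e o) U ->
  ((`|ols X (resp X beta e o) S - beta|)%:E <= eta1 X e S + eta2 X e o G S U)%E.
Proof.
move=> S0 UG min_err; rewrite /eta1 /eta2.
have [_|XS0] := eqVneq (sqn X S) 0; first by case: ifP; rewrite leey.
case: ifP => [_|]; first by rewrite leey.
move=> /norP[XSG0 /norP[_ /norP[XU0 U0]]].
by rewrite -EFinD lee_fin ols_resp_bound // lt0n.
Qed.

End Outliers.

Lemma bfs_minimizer X Y (ord : seq {set 'I_n}) S0 : S0 \in ord ->
  exists S, [/\ S \in ord, bfs X Y ord = ols X Y S
                & {in ord, forall T, err X Y S <= err X Y T}].
Proof.
move=> S0ord; set P := fun S => all (fun T => err X Y S <= err X Y T) ord.
have hasP : has P ord.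
  case: (arg_minP (err X Y) S0ord) => S Sord Smin.
  by apply/hasP; exists S => //; apply/allP => T /Smin.
exists (nth set0 ord (find P ord)); split => //.
  by rewrite mem_nth // -has_find.
exact/allP/(nth_find set0 hasP).
Qed.

End OLS.

Theorem theoremD2 (R : realType) (n : nat) (beta : R) (eps X o : 'I_n -> R)
  (G : {set 'I_n}) (Un : {set {set 'I_n}}) (ord : seq {set 'I_n}) :
  (forall i, i \notin G -> o i = 0) ->
  set0 \notin Un ->
  (exists2 U, U \in Un & inlier G U) ->
  perm_eq ord (enum Un) ->
  ((`|bfs X (resp X beta eps o) ord - beta|)%:E <= bfs_bound X eps o G Un)%E.
Proof.
move=> oG Un0 [U0 U0Un _] ord_Un.
have mem_ord S : (S \in ord) = (S \in Un) by rewrite (perm_mem ord_Un) mem_enum.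
have [S [Sord -> Smin]] := bfs_minimizer X (resp X beta eps o) (etrans (mem_ord U0) U0Un).
have SUn : S \in Un by rewrite -mem_ord.
apply: (bigmax_sup S) => //; apply: le_bigmin => [|U /andP[UUn UG]]; first exact: leey.
apply: bfs_pair_bound => //; last by apply: Smin; rewrite mem_ord.
by rewrite card_gt0; apply: contraNneq Un0 => <-.
Qed.
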